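(* Let $n,t_1,t_2$ be positive integers with $t_1\ge t_2$. Then $$R(C_{t_1},Q_n)=n+t_1-1\qquad\text{and}\qquad R(\mathcal{C}_{t_1,t_2},Q_n)=n+t_1+1.$$
   Context: $C_t$ denotes a chain (totally ordered poset) on $t$ elements. The parallel composition $P_1+P_2$ of posets is the disjoint union of a copy of $P_1$ and a copy of $P_2$ in which every element of one is incomparable to every element of the other. The chain composition is $\mathcal{C}_{t_1,\dots,t_\ell}=C_{t_1}+\dots+C_{t_\ell}$ with $t_1\ge\dots\ge t_\ell$. $Q_n$ is the Boolean lattice of all subsets of an $n$-element set ordered by inclusion. A copy of a poset $P$ in $Q$ is an induced subposet of $Q$ isomorphic to $P$. $R(P_1,P_2)$ is the smallest integer $N$ such that every blue/red coloring of the elements of $Q_N$ contains an all-blue copy of $P_1$ or an all-red copy of $P_2$. *)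

From mathcomp Require Import all_boot.
Set Implicit Arguments. Unset Strict Implicit. Unset Printing Implicit Defensive.

Definition chain_le (t : nat) : rel 'I_t := fun x y => (x <= y)%N.

Definition par_le (T1 T2 : Type) (le1 : rel T1) (le2 : rel T2) : rel (T1 + T2) :=
  fun x y => match x, y with
             | inl a, inl b => le1 a b
             | inr a, inr b => le2 a b
             | _, _ => false
             end.

Definition chain2_le (t1 t2 : nat) : rel ('I_t1 + 'I_t2)%type :=
  par_le (@chain_le t1) (@chain_le t2).

Definition bool_le (n : nat) : rel {set 'I_n} := fun A B => A \subset B.

Definition has_copy (T : finType) (le : rel T) (N : nat) (P : pred {set 'I_N}) :=
  exists f : T -> {set 'I_N},
    [/\ injective f,
        (forall x y, le x y = (f x \subset f y)) &
        (forall x, P (f x))].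

(* Ramsey property: every blue/red colouring (true = blue, false = red) of Q_N
   contains a blue copy of P1 or a red copy of P2. *)
Definition ramsey_prop (T1 T2 : finType) (le1 : rel T1) (le2 : rel T2) (N : nat) :=
  forall c : {set 'I_N} -> bool,
    has_copy le1 (fun A => c A) \/ has_copy le2 (fun A => ~~ c A).

Definition poset_ramsey_eq (T1 T2 : finType) (le1 : rel T1) (le2 : rel T2) (m : nat) :=
  ramsey_prop le1 le2 m /\ forall N, (N < m)%N -> ~ ramsey_prop le1 le2 N.

From mathcomp Require Import all_boot zify.
From Stdlib Require Import Classical.
Set Implicit Arguments. Unset Strict Implicit. Unset Printing Implicit Defensive.

(* Lower bounds: colour by size.  A copy of C_(t+1) or of Q_n in Q_N is spread
   over t + 1, resp. n + 1, distinct levels (proper_chain_card), which is too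
   many for the layer colourings of chain_lower and chain2_lower.

   Upper bound for one chain (chain_upper): given a colouring of Q_N without a
   blue C_t, the blue height of a set Z (the length of the longest blue chain
   below Z) is less than t and grows strictly along proper inclusions ending in
   a blue set.  Embed each A in Q_n, padded with j extra coordinates, as
   pad A j; choosing j as the first level where the height of pad A j is at
   most j makes pad A j red and still defines an embedding (red_cube_copy).

   Upper bound for two chains (chain2_upper): pin each of the two top
   coordinates of Q_N to a copy of Q_(N-2) and apply the chain bound in each;
   two blue chains found in different pinned copies are incomparable. *)

Lemma copy_of_embed (T : finType) (le : rel T) N (P : pred {set 'I_N})
    (f : T -> {set 'I_N}) :
  antisymmetric le -> (forall x y, le x y = (f x \subset f y)) ->
  (forall x, P (f x)) -> has_copy le P.
Proof.
move=> le_anti emb Pf; exists f; split=> // x y fxy.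
by apply: le_anti; rewrite !emb fxy subxx.
Qed.

Lemma chain_le_anti t : antisymmetric (@chain_le t).
Proof. by move=> x y /andP[xy yx]; apply/val_inj/eqP; rewrite eqn_leq; apply/andP. Qed.

Lemma bool_le_anti n : antisymmetric (@bool_le n).
Proof. by move=> A B; rewrite -eqEsubset => /eqP. Qed.

Lemma copy_transfer (T : finType) (le : rel T) M N (P : pred {set 'I_N})
    (e : {set 'I_M} -> {set 'I_N}) :
  (forall A B, (e A \subset e B) = (A \subset B)) ->
  has_copy le (fun A => P (e A)) -> has_copy le P.
Proof.
move=> emb [f [f_inj f_emb Pf]]; exists (fun x => e (f x)); split=> //.
- by move=> x y exy; apply: f_inj; apply/eqP; rewrite eqEsubset -!emb exy subxx.
- by move=> x y; rewrite emb.
Qed.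

Lemma emb_proper (T : finType) (le : rel T) N (f : T -> {set 'I_N}) x y :
  (forall x y, le x y = (f x \subset f y)) -> le x y -> ~~ le y x ->
  f x \proper f y.
Proof. by move=> emb xy yx; rewrite properE -!emb xy yx. Qed.

Lemma proper_chain_card (T : finType) (s : nat -> {set T}) m :
  (forall k, k < m -> s k \proper s k.+1) -> #|s 0| + m <= #|s m|.
Proof.
elim: m => [|m IHm] incr; first by rewrite addn0.
rewrite addnS (leq_ltn_trans (IHm _)) ?proper_card ?incr //.
by move=> k km; apply: incr; apply: ltnW.
Qed.

Lemma chain_copy_card t N (g : 'I_t.+1 -> {set 'I_N}) :
  (forall x y, chain_le x y = (g x \subset g y)) ->
  #|g ord0| + t <= #|g ord_max|.
Proof.
move=> emb; have step k : k < t -> g (inord k) \proper g (inord k.+1).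
  move=> kt; have kt' : k < t.+1 by apply: ltnW.
  by apply: (emb_proper emb); rewrite /chain_le !inordK // -ltnNge.
have := proper_chain_card step.
have -> : inord 0 = ord0 :> 'I_t.+1 by apply: val_inj; rewrite /= inordK.
by have -> : inord t = ord_max :> 'I_t.+1 by apply: val_inj; rewrite /= inordK.
Qed.

(* In a copy of Q_n the top is at least n levels above the bottom: follow the
   images of the initial segments of 'I_n. *)
Lemma cube_copy_card n N (f : {set 'I_n} -> {set 'I_N}) :
  (forall A B, bool_le A B = (f A \subset f B)) ->
  #|f set0| + n <= #|f setT|.
Proof.
move=> emb; pose seg k : {set 'I_n} := [set x : 'I_n | x < k].
have step k : k < n -> f (seg k) \proper f (seg k.+1).
  move=> kn; apply: (emb_proper emb).
    by apply/subsetP=> x; rewrite !inE => /ltnW.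
  by apply/subsetPn; exists (Ordinal kn); rewrite !inE /= ?ltnn.
have := proper_chain_card step.
have -> : seg 0 = set0 by apply/setP=> x; rewrite !inE.
by have -> : seg n = setT by apply/setP=> x; rewrite !inE ltn_ord.
Qed.

Lemma chain_lower n t N :
  0 < t -> N < n + t - 1 -> ~ ramsey_prop (@chain_le t) (@bool_le n) N.
Proof.
case: t => // t _ ltN /(_ (fun A : {set 'I_N} => n <= #|A|)).
case=> [[g [_ emb blue]] | [f [_ emb red]]].
- have := chain_copy_card emb; have := blue ord0.
  have := subset_leq_card (subsetT (g ord_max)); rewrite cardsT card_ord; lia.
- have := cube_copy_card emb; have := red setT; rewrite -ltnNge; lia.
Qed.

(* A blue chain incomparable to another blue set avoids both the
   empty and the full set, so it lives strictly between the levels n and N. *)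
Lemma chain2_lower n t1 t2 N :
  0 < t1 -> 0 < t2 -> N < n + t1 + 1 ->
  ~ ramsey_prop (@chain2_le t1 t2) (@bool_le n) N.
Proof.
case: t1 => // t1 _ t2_gt0 ltN.
move=> /(_ (fun A : {set 'I_N} => (A == set0) || (n < #|A|))).
case=> [[g [_ emb blue]] | [f [_ emb red]]].
- pose y0 : 'I_t2 := Ordinal t2_gt0.
  pose gl (a : 'I_t1.+1) := g (inl a).
  have inner a : n < #|gl a| < N.
    have ne0 : g (inl a) != set0.
      by apply/eqP=> g0; have := emb (inl a) (inr y0); rewrite g0 sub0set.
    have neT : g (inl a) \proper setT.
      rewrite properT; apply/eqP=> gT.
      by have := emb (inr y0) (inl a); rewrite gT subsetT.
    have := blue (inl a); rewrite (negbTE ne0) /= => ->.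
    by have := proper_card neT; rewrite cardsT card_ord.
  have := @chain_copy_card _ _ gl (fun x y => emb (inl x) (inl y)).
  have := inner ord0; have := inner ord_max; lia.
- have /norP[_ top] := red setT; have /norP[bot _] := red set0.
  rewrite -leqNgt in top; rewrite -card_gt0 in bot.
  have := leq_trans (leq_add bot (leqnn n)) (cube_copy_card emb).
  by rewrite add1n => /leq_trans/(_ top); rewrite ltnn.
Qed.

Section BlueHeight.

Variables (N t : nat) (c : {set 'I_N} -> bool).
Hypothesis t_gt0 : 0 < t.
Hypothesis no_blue_copy : ~ has_copy (@chain_le t) c.

Definition blue_chain k (Z : {set 'I_N}) :=
  [exists s : k.-tuple {set 'I_N},
    [&& pairwise (fun A B : {set 'I_N} => A \proper B) s, all c s
      & all (fun A : {set 'I_N} => A \subset Z) s]].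

Lemma blue_chain0 Z : blue_chain 0 Z.
Proof. by apply/existsP; exists [tuple]. Qed.

Lemma blue_chain1 Z : c Z -> blue_chain 1 Z.
Proof. by move=> cZ; apply/existsP; exists [tuple Z]; rewrite /= cZ subxx. Qed.

Lemma blue_chain_mono k (A B : {set 'I_N}) :
  A \subset B -> blue_chain k A -> blue_chain k B.
Proof.
move=> AB /existsP[s /and3P[s_incr s_blue s_sub]]; apply/existsP; exists s.
rewrite s_incr s_blue; apply/allP=> X /(allP s_sub) XA.
exact: subset_trans XA AB.
Qed.

Lemma blue_chain_ext k (Z' Z : {set 'I_N}) :
  blue_chain k Z' -> Z' \proper Z -> c Z -> blue_chain k.+1 Z.
Proof.
move=> /existsP[s /and3P[s_incr s_blue s_sub]] Z'Z cZ.
have below X : X \in s -> X \proper Z.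
  by move=> /(allP s_sub) XZ'; exact: sub_proper_trans XZ' Z'Z.
apply/existsP; exists [tuple of rcons s Z]; apply/and3P; split.
- by rewrite pairwise_rcons s_incr andbT; apply/allP.
- by rewrite all_rcons cZ.
- rewrite all_rcons subxx /=; apply/allP=> X /below; exact: proper_sub.
Qed.

Lemma no_blue_chain_t Z : ~~ blue_chain t Z.
Proof.
apply/negP=> /existsP[s /and3P[s_incr s_blue _]]; apply: no_blue_copy.
have /(pairwiseP set0) s_nth := s_incr.
pose g (i : 'I_t) := tnth s i.
have g_lt (i j : 'I_t) : i < j -> g i \proper g j.
  by move=> ij; rewrite /g !(tnth_nth set0) s_nth // inE size_tuple.
apply: (@copy_of_embed _ _ _ _ g (@chain_le_anti t)).
- move=> i j; rewrite /chain_le; case: ltngtP => [ij|ji|/val_inj ->].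
  + by rewrite proper_sub ?g_lt.
  + by apply/esym/negbTE; have := g_lt _ _ ji; rewrite properE => /andP[].
  + by rewrite subxx.
- by move=> i; apply: (allP s_blue); rewrite mem_tnth.
Qed.

Definition height (Z : {set 'I_N}) := \max_(k < t | blue_chain k Z) k.

Lemma height_lt Z : height Z < t.
Proof.
by rewrite -(prednK t_gt0) ltnS; apply/bigmax_leqP=> k _; rewrite -ltnS prednK.
Qed.

Lemma blue_chain_height Z : blue_chain (height Z) Z.
Proof.
rewrite /height (bigmax_eq_arg (Ordinal t_gt0)) ?blue_chain0 //.
by case: arg_maxnP => [|k]; first exact: blue_chain0.
Qed.

Lemma height_ge k Z : k <= t -> blue_chain k Z -> k <= height Z.
Proof.
move=> kt kZ; have kt' : k < t.
  by rewrite ltn_neqAle kt andbT; apply: contraNneq (no_blue_chain_t Z) => <-.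
exact: (leq_bigmax_cond (F := val) (Ordinal kt')).
Qed.

Lemma height_mono (A B : {set 'I_N}) : A \subset B -> height A <= height B.
Proof.
move=> AB; apply: (height_ge (ltnW (height_lt A))).
exact: blue_chain_mono AB (blue_chain_height A).
Qed.

Lemma height_blue Z : c Z -> 0 < height Z.
Proof. by move=> cZ; apply: (height_ge t_gt0 (blue_chain1 cZ)). Qed.

Lemma height_succ (Z' Z : {set 'I_N}) :
  Z' \proper Z -> c Z -> height Z' < height Z.
Proof.
move=> Z'Z cZ; apply: (height_ge (height_lt Z')).
exact: blue_chain_ext (blue_chain_height Z') Z'Z cZ.
Qed.

Variables (n : nat) (F : {set 'I_n} -> nat -> {set 'I_N}).
Hypothesis F_mono :
  forall (A B : {set 'I_n}) j j', A \subset B -> j <= j' -> F A j \subset F B j'.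
Hypothesis F_reflect :
  forall (A B : {set 'I_n}) j j', F A j \subset F B j' -> A \subset B.
Hypothesis F_strict : forall A j, j.+1 < t -> F A j \proper F A j.+1.

(* Since the height is below t, the level j = t - 1 always qualifies. *)
Lemma level_exists A : exists j, height (F A j) <= j.
Proof. by exists t.-1; rewrite -ltnS prednK ?height_lt. Qed.

Definition level A := ex_minn (level_exists A).

Lemma level_lt A : level A < t.
Proof.
rewrite /level; case: ex_minnP => j _ j_min.
by rewrite -(prednK t_gt0) ltnS j_min // -ltnS prednK ?height_lt.
Qed.

Lemma level_mono (A B : {set 'I_n}) : A \subset B -> level A <= level B.
Proof.
move=> AB; rewrite {2}/level; case: ex_minnP => j hBj _.
rewrite /level; case: ex_minnP => i _ /(_ j) -> //.
exact: leq_trans (height_mono (F_mono AB (leqnn j))) hBj.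
Qed.

(* At its level, F A is red: a blue F A j would have height above j. *)
Lemma level_red A : ~~ c (F A (level A)).
Proof.
apply/negP=> blue; move: (level_lt A) blue; rewrite /level.
case: ex_minnP => [[|j] hj j_min] jt blue.
  by move: hj; rewrite leqn0 => /eqP h0; move: (height_blue blue); rewrite h0.
have hj' : j < height (F A j).
  by rewrite ltnNge; apply/negP=> /j_min; rewrite ltnn.
have := height_succ (F_strict A jt) blue; lia.
Qed.

Lemma red_cube_copy : has_copy (@bool_le n) (fun A => ~~ c A).
Proof.
apply: (@copy_of_embed _ _ _ _ (fun A => F A (level A)) (@bool_le_anti n)) => //.
- move=> A B; apply/idP/idP => [AB|]; last exact: F_reflect.
  exact: F_mono AB (level_mono AB).
- exact: level_red.
Qed.

End BlueHeight.

Definition pad n N (nN : n <= N) (A : {set 'I_n}) j : {set 'I_N} :=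
  widen_ord nN @: A :|: [set x : 'I_N | n <= x < n + j].

Section Pad.

Variables (n N : nat) (nN : n <= N).

Lemma pad_mono (A B : {set 'I_n}) j j' :
  A \subset B -> j <= j' -> pad nN A j \subset pad nN B j'.
Proof.
move=> AB jj'; apply: setUSS; first exact: imsetS.
by apply/subsetP=> x; rewrite !inE => /andP[-> /leq_trans]; apply; rewrite leq_add2l.
Qed.

Lemma pad_reflect (A B : {set 'I_n}) j j' :
  pad nN A j \subset pad nN B j' -> A \subset B.
Proof.
move=> /subsetP AB; apply/subsetP=> x xA.
have : widen_ord nN x \in pad nN B j' by apply: AB; rewrite inE imset_f.
rewrite !inE /= leqNgt ltn_ord /= orbF => /imsetP[y yB /(congr1 val) /= /val_inj->].
exact: yB.
Qed.

Lemma pad_strict (A : {set 'I_n}) j : n + j < N -> pad nN A j \proper pad nN A j.+1.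
Proof.
move=> njN; rewrite properE pad_mono //=; apply/subsetPn; exists (Ordinal njN).
  by rewrite !inE /= leq_addr addnS ltnSn orbT.
rewrite !inE /= ltnn andbF orbF; apply/imsetP=> -[y _ /(congr1 val) /= nj_y].
by move: (ltn_ord y); rewrite -nj_y ltnNge leq_addr.
Qed.

End Pad.

Lemma chain_upper n t N :
  0 < t -> n + t - 1 <= N -> ramsey_prop (@chain_le t) (@bool_le n) N.
Proof.
move=> t_gt0 le_N c; have [blue|no_blue] := classic (has_copy (@chain_le t) c).
  by left.
right; have nN : n <= N by lia.
apply: (red_cube_copy t_gt0 no_blue (F := pad nN)).
- by move=> A B j j'; apply: pad_mono.
- by move=> A B j j'; apply: pad_reflect.
- by move=> A j jt; apply: pad_strict; lia.
Qed.

Definition pin M N (MN : M <= N) (s : 'I_N) (A : {set 'I_M}) : {set 'I_N} :=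
  widen_ord MN @: A :|: [set s].

Section Pin.

Variables (M N : nat) (MN : M <= N).

Lemma widen_notin (A : {set 'I_M}) (s : 'I_N) : M <= s -> s \notin widen_ord MN @: A.
Proof.
move=> Ms; apply/imsetP=> -[y _ /(congr1 val) /= sy].
by move: (ltn_ord y); rewrite -sy ltnNge Ms.
Qed.

Lemma pin_sub (s : 'I_N) (A B : {set 'I_M}) :
  M <= s -> (pin MN s A \subset pin MN s B) = (A \subset B).
Proof.
move=> Ms; apply/idP/idP => [/subsetP AB|AB]; last by apply: setSU; apply: imsetS.
apply/subsetP=> x xA; have : widen_ord MN x \in pin MN s B.
  by apply: AB; rewrite inE imset_f.
rewrite !inE => /orP[/imsetP[y yB /(congr1 val) /= /val_inj-> //] | /eqP xs].
by move: (widen_notin A Ms); rewrite -xs imset_f.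
Qed.

Lemma pin_mem (s : 'I_N) (A : {set 'I_M}) : s \in pin MN s A.
Proof. by rewrite !inE eqxx orbT. Qed.

Lemma pin_notin (s s' : 'I_N) (A : {set 'I_M}) :
  M <= s' -> s' != s -> s' \notin pin MN s A.
Proof. by move=> Ms' s's; rewrite !inE negb_or widen_notin. Qed.

End Pin.

Lemma par_le_anti (T1 T2 : finType) (le1 : rel T1) (le2 : rel T2) :
  antisymmetric le1 -> antisymmetric le2 -> antisymmetric (par_le le1 le2).
Proof.
by move=> anti1 anti2 [x|x] [y|y] //= => [/anti1|/anti2] ->.
Qed.

Lemma pinned_par_copy (T1 T2 : finType) (le1 : rel T1) (le2 : rel T2)
    M N (MN : M <= N) (P : pred {set 'I_N}) (a b : 'I_N) :
  antisymmetric le1 -> antisymmetric le2 -> M <= a -> M <= b -> a != b ->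
  has_copy le1 (fun A => P (pin MN a A)) -> has_copy le2 (fun A => P (pin MN b A)) ->
  has_copy (par_le le1 le2) P.
Proof.
move=> anti1 anti2 Ma Mb ab [g1 [_ emb1 P1]] [g2 [_ emb2 P2]].
pose h x := match x with inl u => pin MN a (g1 u) | inr v => pin MN b (g2 v) end.
apply: (@copy_of_embed _ _ _ _ h (par_le_anti anti1 anti2)); last by case.
move=> [u|v] [u'|v'] /=.
- by rewrite pin_sub.
- apply/esym/negbTE/subsetPn; exists a; first exact: pin_mem.
  by rewrite pin_notin // eq_sym.
- apply/esym/negbTE/subsetPn; exists b; first exact: pin_mem.
  by rewrite pin_notin // eq_sym.
- by rewrite pin_sub.
Qed.

Lemma chain2_upper n t1 t2 N :
  0 < t1 -> 0 < t2 -> t2 <= t1 -> n + t1 + 1 <= N ->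
  ramsey_prop (@chain2_le t1 t2) (@bool_le n) N.
Proof.
move=> t1_gt0 t2_gt0 t21 le_N c; pose M := N - 2.
have MN : M <= N by apply: leq_subr.
have lt_a : M < N by rewrite /M; lia.
have lt_b : M.+1 < N by rewrite /M; lia.
pose a := Ordinal lt_a; pose b := Ordinal lt_b.
have red_transfer (s : 'I_N) : M <= s ->
    has_copy (@bool_le n) (fun A => ~~ c (pin MN s A)) ->
    has_copy (@bool_le n) (fun A => ~~ c A).
  by move=> Ms; apply: copy_transfer => A B; rewrite pin_sub.
have le1 : n + t1 - 1 <= M by rewrite /M; lia.
have le2 : n + t2 - 1 <= M by rewrite /M; lia.
case: (chain_upper t1_gt0 le1 (fun A => c (pin MN a A))) => [blue1|red]; last first.
  by right; apply: red_transfer red.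
case: (chain_upper t2_gt0 le2 (fun A => c (pin MN b A))) => [blue2|red]; last first.
  by right; apply: red_transfer red; exact: leqnSn.
left; have ab : a != b by rewrite -val_eqE /= neq_ltn ltnSn.
apply: (pinned_par_copy (@chain_le_anti t1) (@chain_le_anti t2) _ _ ab blue1 blue2).
- exact: leqnn.
- exact: leqnSn.
Qed.

Theorem theorem5 (n t1 t2 : nat) :
  (0 < n)%N -> (0 < t1)%N -> (0 < t2)%N -> (t2 <= t1)%N ->
  poset_ramsey_eq (@chain_le t1) (@bool_le n) (n + t1 - 1) /\
  poset_ramsey_eq (@chain2_le t1 t2) (@bool_le n) (n + t1 + 1).
Proof.
move=> _ t1_gt0 t2_gt0 t21; split; split.
- exact: chain_upper.
- by move=> N ltN; apply: chain_lower.
- exact: chain2_upper.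
- by move=> N ltN; apply: chain2_lower.
Qed.
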